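(* Let $0<\theta<\tfrac12$, $\alpha>0$, $\beta\in\mathbb{R}$, and let $0\le\phi\le 1$ be smooth with compact support in $[1,2]$. Then $$\sum_{\ell\in\mathbb{Z}}|M_\theta(\tfrac12+i(\alpha\ell+\beta))|^2\phi\Big(\frac{\ell}{T}\Big)\ll T\log T.$$
   Context: $M_\theta(s)=\sum_{n\le T^{\theta}}\frac{\mu(n)}{n^s}\big(1-\frac{\log n}{\log T^{\theta}}\big)$ with $\mu$ the Möbius function. *)

From Stdlib Require Import Reals ZArith List Bool.
From mathcomp Require prime.
Open Scope R_scope.

Definition squarefreeb (n : nat) : bool :=
  Nat.ltb 0 n &&
  forallb (fun p => Nat.eqb (mathcomp.boot.prime.logn p n) 1)
          (mathcomp.boot.prime.primes n).

Definition mobius (n : nat) : Z :=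
  if squarefreeb n then ((-1) ^ Z.of_nat (length (mathcomp.boot.prime.primes n)))%Z
  else 0%Z.

(* Coefficient of n^{-s} in M_theta:  mu(n) (1 - log n / log T^theta)
   for 1 <= n <= T^theta, and 0 otherwise. *)
Definition Mcoef (theta T : R) (n : nat) : R :=
  if Rle_dec (INR n) (Rpower T theta) then
    IZR (mobius n) * (1 - ln (INR n) / ln (Rpower T theta))
  else 0.

(* Upper bound for the range of n (every n <= T^theta lies in 1..Mlen). *)
Definition Mlen (theta T : R) : nat := Z.to_nat (up (Rpower T theta)).

(* M_theta(1/2 + i t) = sum_n c_n n^{-1/2} e^{-i t log n}; its real and
   imaginary parts, written out. *)
Definition M_re (theta T t : R) : R :=
  fold_right Rplus 0
    (map (fun n => Mcoef theta T n * Rpower (INR n) (-/2) * cos (t * ln (INR n)))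
         (seq 1 (Mlen theta T))).

Definition M_im (theta T t : R) : R :=
  fold_right Rplus 0
    (map (fun n => - (Mcoef theta T n * Rpower (INR n) (-/2) * sin (t * ln (INR n))))
         (seq 1 (Mlen theta T))).

Definition M_abs2 (theta T t : R) : R := (M_re theta T t)^2 + (M_im theta T t)^2.

Definition smooth (f : R -> R) : Prop :=
  exists D : nat -> R -> R,
    D 0%nat = f /\ forall (k : nat) (x : R), derivable_pt_lim (D k) x (D (S k) x).

Definition sym_sum (N : nat) (F : Z -> R) : R :=
  fold_right Rplus 0
    (map (fun k => F (Z.of_nat k - Z.of_nat N)%Z) (seq 0 (2 * N + 1))).

From Stdlib Require Import Reals ZArith List Lra Lia.
Open Scope R_scope.

(** Write [M_theta(1/2 + it) = sum_{n <= M} a_n n^{-it}] with [|a_n| <= n^{-1/2}] and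
    [M = Mlen theta T ~ T^theta]. Since [0 <= phi <= 1] is supported in [[1, 2]],
    every symmetric partial sum of the smoothed series is bounded by the plain sum
    of [|M_theta(1/2 + i(alpha l + beta))|^2] over a window of [K <= T + 2]
    consecutive integers [l].
    Expanding the square, the window sum is [sum_{m,n} a_m a_n S(m,n)], where
    [S(m,n)] is a sum of [K] cosines with step [alpha (log m - log n)], hence at most
    [min (K, 1 / |sin (alpha (log m - log n) / 2)|)]. Because the [log m] are
    [1/M]-spaced, for fixed [n] at most one [m] per integer [k] has its phase near
    [k pi]; with the weights [e^{-|log m - log n|/2}] each column therefore sums to
    [O(K + M^2 / alpha)] (section [Resonance]), and the weights [1/m + 1/n] cost a
    factor [O(log M)] (section [Window]). As [theta < 1/2] we have [M^2 <= 4T],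
    which gives the bound [O(T log T)]. *)

Definition lsum {A : Type} (f : A -> R) (s : list A) : R := fold_right Rplus 0 (map f s).

Lemma lsum_nil {A} (f : A -> R) : lsum f nil = 0.
Proof. reflexivity. Qed.

Lemma lsum_cons {A} (f : A -> R) x s : lsum f (x :: s) = f x + lsum f s.
Proof. reflexivity. Qed.

Lemma lsum_app {A} (f : A -> R) s t : lsum f (s ++ t) = lsum f s + lsum f t.
Proof.
  induction s as [|x s IH]; simpl; [unfold lsum; simpl; ring|].
  rewrite !lsum_cons, IH; ring.
Qed.

Lemma lsum_ext {A} (f g : A -> R) s :
  (forall x, In x s -> f x = g x) -> lsum f s = lsum g s.
Proof.
  induction s as [|x s IH]; intros H; [reflexivity|].
  rewrite !lsum_cons, H, IH; [reflexivity| |simpl; auto].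
  intros; apply H; simpl; auto.
Qed.

Lemma lsum_le {A} (f g : A -> R) s :
  (forall x, In x s -> f x <= g x) -> lsum f s <= lsum g s.
Proof.
  induction s as [|x s IH]; intros H; [unfold lsum; simpl; lra|].
  rewrite !lsum_cons. apply Rplus_le_compat; [apply H; simpl; auto|].
  apply IH; intros; apply H; simpl; auto.
Qed.

Lemma lsum_const {A} (c : R) (s : list A) : lsum (fun _ => c) s = c * INR (length s).
Proof.
  induction s as [|x s IH]; [unfold lsum; simpl; ring|].
  rewrite lsum_cons, IH; simpl length; rewrite S_INR; ring.
Qed.

Lemma lsum_nonneg {A} (f : A -> R) s : (forall x, In x s -> 0 <= f x) -> 0 <= lsum f s.
Proof.
  intros H. rewrite <- (Rmult_0_l (INR (length s))), <- lsum_const. now apply lsum_le.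
Qed.

Lemma lsum_plus {A} (f g : A -> R) s : lsum (fun x => f x + g x) s = lsum f s + lsum g s.
Proof.
  induction s as [|x s IH]; [unfold lsum; simpl; ring|].
  rewrite !lsum_cons, IH; ring.
Qed.

Lemma lsum_scal {A} (c : R) (f : A -> R) s : lsum (fun x => c * f x) s = c * lsum f s.
Proof.
  induction s as [|x s IH]; [unfold lsum; simpl; ring|].
  rewrite !lsum_cons, IH; ring.
Qed.

Lemma lsum_abs {A} (f : A -> R) s : Rabs (lsum f s) <= lsum (fun x => Rabs (f x)) s.
Proof.
  induction s as [|x s IH]; [unfold lsum; simpl; rewrite Rabs_R0; lra|].
  rewrite !lsum_cons. eapply Rle_trans; [apply Rabs_triang|lra].
Qed.

Lemma lsum_swap {A B} (f : A -> B -> R) s t :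
  lsum (fun x => lsum (fun y => f x y) t) s = lsum (fun y => lsum (fun x => f x y) s) t.
Proof.
  induction s as [|x s IH].
  - unfold lsum at 1; simpl.
    rewrite (lsum_ext _ (fun _ => 0)) by reflexivity.
    rewrite lsum_const; ring.
  - rewrite lsum_cons, IH, <- lsum_plus. apply lsum_ext; intros; rewrite lsum_cons; ring.
Qed.

Lemma lsum_mul {A B} (f : A -> R) (g : B -> R) s t :
  lsum f s * lsum g t = lsum (fun x => lsum (fun y => f x * g y) t) s.
Proof.
  rewrite Rmult_comm, <- lsum_scal. apply lsum_ext; intros.
  now rewrite Rmult_comm, <- lsum_scal.
Qed.

(** This is how sums over integers [n] are dominated by
    sums over their "resonance indices". *)
Lemma lsum_le_injective {A} (f : A -> R) (g : A -> nat) (c : nat -> R) (P : A -> Prop)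
    (s : list A) (r : list nat) :
  NoDup s -> NoDup r ->
  (forall x, In x s -> f x <= 0 \/ P x) ->
  (forall x y, In x s -> In y s -> P x -> P y -> g x = g y -> x = y) ->
  (forall j, In j r -> 0 <= c j) ->
  (forall x, In x s -> P x -> In (g x) r /\ f x <= c (g x)) ->
  lsum f s <= lsum c r.
Proof.
  revert r. induction s as [|a s IH]; intros r Hs Hr Hsplit Hinj Hc Hmap.
  { now apply lsum_nonneg. }
  apply NoDup_cons_iff in Hs as [Ha Hs]. rewrite lsum_cons.
  destruct (Hsplit a (or_introl eq_refl)) as [Hfa|Pa].
  - enough (lsum f s <= lsum c r) by lra.
    apply IH; auto; intros; [apply Hsplit|apply Hinj|apply Hmap]; simpl; auto.
  - destruct (Hmap a (or_introl eq_refl) Pa) as [Hga Hfa].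
    destruct (in_split _ _ Hga) as [r1 [r2 ->]].
    rewrite lsum_app, lsum_cons.
    enough (lsum f s <= lsum c (r1 ++ r2)) by (rewrite lsum_app in *; lra).
    apply IH; auto.
    + now apply NoDup_remove_1 in Hr.
    + intros; apply Hsplit; simpl; auto.
    + intros; apply Hinj; simpl; auto.
    + intros j Hj; apply Hc; apply in_app_or in Hj; apply in_or_app; simpl; tauto.
    + intros x Hx Px. destruct (Hmap x (or_intror Hx) Px) as [Hgx Hfx]. split; auto.
      apply in_app_or in Hgx. apply in_or_app.
      destruct Hgx as [?|[Heq|?]]; auto.
      exfalso; apply Ha.
      replace a with x by (apply Hinj; simpl; auto). exact Hx.
Qed.

Lemma exp_le_mono x y : x <= y -> exp x <= exp y.
Proof. intros [H|H]; [left; now apply exp_increasing|subst; lra]. Qed.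

Lemma ln_le_mono x y : 0 < x -> x <= y -> ln x <= ln y.
Proof. intros Hx [H|H]; [left; now apply ln_increasing|subst; lra]. Qed.

Lemma ln_pos_gt1 x : 1 < x -> 0 < ln x.
Proof. intros; rewrite <- ln_1; apply ln_increasing; lra. Qed.

Lemma ln_diff_lb a b : 0 < a -> a <= b -> (b - a) / b <= ln b - ln a.
Proof.
  intros Ha Hab.
  assert (Hq : 0 < a / b) by (apply Rdiv_lt_0_compat; lra).
  pose proof (exp_ineq1_le (ln (a / b))) as Hexp. rewrite exp_ln in Hexp by exact Hq.
  unfold Rdiv in Hexp. rewrite ln_mult, ln_Rinv in Hexp by (try apply Rinv_0_lt_compat; lra).
  replace ((b - a) / b) with (1 - a / b) by (field; lra). lra.
Qed.

Lemma ln_spacing M x y :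
  In x (seq 1 M) -> In y (seq 1 M) -> (x < y)%nat -> / INR M <= ln (INR y) - ln (INR x).
Proof.
  intros Hx Hy Hxy. apply in_seq in Hx, Hy.
  assert (1 <= INR x) by (apply (le_INR 1); lia).
  assert (INR x + 1 <= INR y) by (rewrite <- S_INR; apply le_INR; lia).
  assert (INR y <= INR M) by (apply le_INR; lia).
  eapply Rle_trans; [|apply ln_diff_lb; lra].
  unfold Rdiv. apply Rle_trans with (1 * / INR y).
  - rewrite Rmult_1_l. apply Rinv_le_contravar; lra.
  - apply Rmult_le_compat_r; [left; apply Rinv_0_lt_compat|]; lra.
Qed.

Lemma harmonic_bound M : (1 <= M)%nat -> lsum (fun n => / INR n) (seq 1 M) <= 1 + ln (INR M).
Proof.
  induction M as [|M IH]; intros HM; [lia|].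
  destruct (Nat.eq_dec M 0) as [->|HM0].
  - unfold lsum; simpl. rewrite ln_1. lra.
  - rewrite seq_S, lsum_app, lsum_cons, lsum_nil.
    replace (1 + M)%nat with (S M) by lia.
    assert (0 < INR M) by (apply lt_0_INR; lia).
    pose proof (ln_diff_lb (INR M) (INR (S M)) ltac:(lra) ltac:(rewrite S_INR; lra)) as Hgap.
    rewrite S_INR in *.
    replace ((INR M + 1 - INR M) / (INR M + 1)) with (/ (INR M + 1)) in Hgap by (field; lra).
    specialize (IH ltac:(lia)). lra.
Qed.

Lemma geometric_bound g n :
  0 < g -> lsum (fun j => exp (- g * INR j)) (seq 0 n) <= / (1 - exp (- g)).
Proof.
  intros Hg.
  assert (Hq : exp (- g) < 1) by (rewrite <- exp_0; apply exp_increasing; lra).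
  assert (Htel : forall k, (1 - exp (- g)) * lsum (fun j => exp (- g * INR j)) (seq 0 k)
                           = 1 - exp (- g * INR k)).
  { induction k as [|k IH].
    { simpl seq; simpl INR. rewrite lsum_nil, !Rmult_0_r, exp_0; ring. }
    rewrite seq_S, lsum_app, lsum_cons, lsum_nil, Rmult_plus_distr_l, IH.
    simpl (0 + k)%nat. rewrite S_INR. replace (- g * (INR k + 1)) with (- g * INR k + - g) by ring.
    rewrite exp_plus. ring. }
  pose proof (exp_pos (- g * INR n)).
  apply (Rmult_le_reg_l (1 - exp (- g))); [lra|].
  rewrite Htel, Rinv_r; lra.
Qed.

Lemma sin_ge_half a : 0 <= a <= 1 -> a / 2 <= sin a.
Proof.
  intros Ha. assert (Hpi : a <= PI) by (pose proof PI2_1; lra).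
  destruct (SIN a (proj1 Ha) Hpi) as [Hlb _]. eapply Rle_trans; [|exact Hlb].
  replace (sin_lb a) with (a - a^3/6 + a^5/120 - a^7/5040)
    by (unfold sin_lb, sin_approx, sin_term; simpl; field).
  assert (0 <= a^2 <= 1) by nra. assert (0 <= a^4 <= 1) by nra.
  assert (0 <= a^6 <= 1) by nra. nra.
Qed.

Lemma sin_abs_ge e d : 0 < e -> e <= Rabs d -> Rabs d <= PI / 2 -> sin e <= Rabs (sin d).
Proof.
  intros He H1 H2. pose proof PI2_1.
  destruct (Rle_dec 0 d).
  - rewrite Rabs_right in * by lra.
    eapply Rle_trans; [apply sin_incr_1|apply Rle_abs]; lra.
  - rewrite Rabs_left in * by lra. rewrite <- Rabs_Ropp, <- sin_neg.
    eapply Rle_trans; [apply sin_incr_1|apply Rle_abs]; lra.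
Qed.

Lemma abs_sin_shift d k : Rabs (sin (d + IZR k * PI)) = Rabs (sin d).
Proof.
  assert (Hs : sin (IZR k * PI) = 0) by (apply sin_eq_0_1; now exists k).
  assert (Hc : Rabs (cos (IZR k * PI)) = 1).
  { pose proof (sin2_cos2 (IZR k * PI)) as H. rewrite Hs in H.
    rewrite <- (Rabs_R1). apply Rsqr_eq_abs_0. unfold Rsqr in *. lra. }
  rewrite sin_plus, Hs, Rmult_0_r, Rplus_0_r, Rabs_mult, Hc. ring.
Qed.

(** [e^{-x/2} e^{-y/2} <= (e^{-x} + e^{-y}) e^{-|x-y|/2}]: the weight
    [(mn)^{-1/2}] is controlled by [(1/m + 1/n)] times a decay in [|log m - log n|]. *)
Lemma exp_half_pair x y :
  exp (- x / 2) * exp (- y / 2) <= (exp (- x) + exp (- y)) * exp (- Rabs (x - y) / 2).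
Proof.
  rewrite <- exp_plus, Rmult_plus_distr_r, <- !exp_plus.
  destruct (Rle_dec y x).
  - rewrite Rabs_right by lra.
    replace (- y + - (x - y) / 2) with (- x / 2 + - y / 2) by field.
    pose proof (exp_pos (- x + - (x - y) / 2)). lra.
  - rewrite Rabs_left by lra.
    replace (- x + - - (x - y) / 2) with (- x / 2 + - y / 2) by field.
    pose proof (exp_pos (- y + - - (x - y) / 2)). lra.
Qed.

(** * Sums of cosines in arithmetic progression *)

Definition cos_prog (K : nat) (c x : R) : R := lsum (fun j => cos (c + INR j * x)) (seq 0 K).

Lemma cos_progression_sum K c x :
  2 * sin (x / 2) * cos_prog K c x
  = sin (c + (INR K - / 2) * x) - sin (c - x / 2).
Proof.
  unfold cos_prog. induction K as [|K IH].
  - simpl. rewrite lsum_nil. replace (c + (0 - / 2) * x) with (c - x / 2) by field. ring.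
  - rewrite seq_S, lsum_app, lsum_cons, lsum_nil, Rmult_plus_distr_l, IH.
    simpl (0 + K)%nat. rewrite S_INR.
    replace (c + (INR K + 1 - / 2) * x) with ((c + INR K * x) + x / 2) by field.
    replace (c + (INR K - / 2) * x) with ((c + INR K * x) - x / 2) by field.
    rewrite sin_plus, sin_minus. ring.
Qed.

Lemma cos_progression_cancel K c x :
  sin (x / 2) <> 0 -> Rabs (cos_prog K c x) <= / Rabs (sin (x / 2)).
Proof.
  intros Hs. pose proof (cos_progression_sum K c x) as Hid.
  set (S := cos_prog K c x) in *.
  assert (Hsin : forall y, Rabs (sin y) <= 1) by (intros; apply Rabs_le, SIN_bound).
  assert (H2 : Rabs (2 * sin (x / 2) * S) <= 2).
  { rewrite Hid. eapply Rle_trans; [apply Rabs_triang|]. rewrite Rabs_Ropp.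
    pose proof (Hsin (c + (INR K - / 2) * x)). pose proof (Hsin (c - x / 2)). lra. }
  rewrite !Rabs_mult, (Rabs_right 2) in H2 by lra.
  assert (0 < Rabs (sin (x / 2))) by now apply Rabs_pos_lt.
  apply (Rmult_le_reg_l (Rabs (sin (x / 2)))); [assumption|].
  rewrite Rinv_r by lra. nra.
Qed.

Lemma cos_progression_trivial K c x :
  Rabs (cos_prog K c x) <= INR K.
Proof.
  unfold cos_prog. eapply Rle_trans; [apply lsum_abs|].
  rewrite <- (length_seq K 0) at 2. rewrite <- (Rmult_1_l (INR _)), <- lsum_const.
  apply lsum_le. intros. apply Rabs_le, COS_bound.
Qed.

Lemma cos_prog_opp K c x : cos_prog K (- c) (- x) = cos_prog K c x.
Proof.
  apply lsum_ext. intros j _.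
  replace (- c + INR j * - x) with (- (c + INR j * x)) by ring. apply cos_neg.
Qed.

(** * Resonances of [alpha (log m - log n0) / 2] with multiples of [pi] *)

Definition zcode (k : Z) : nat :=
  if (0 <=? k)%Z then Z.to_nat (2 * k) else Z.to_nat (- 2 * k - 1).

Lemma zcode_inj k k' : zcode k = zcode k' -> k = k'.
Proof. unfold zcode. destruct (Z.leb_spec 0 k), (Z.leb_spec 0 k'); lia. Qed.

Lemma zcode_le k : INR (zcode k) <= 2 * Rabs (IZR k).
Proof.
  unfold zcode. rewrite Rabs_Zabs, INR_IZR_INZ, <- mult_IZR. apply IZR_le.
  destruct (Z.leb_spec 0 k); lia.
Qed.

(** [1 / (1 - e^{-pi/(4 alpha)})]: the sum of the geometric series of weights
    carried by the resonances. *)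
Definition geom_const (alpha : R) : R := / (1 - exp (- (PI / (4 * alpha)))).

(** The resulting bound: [K] times the geometric series over resonances,
    plus [M] times the off-resonance bound. *)
Definition resonance_const (alpha : R) (K M : nat) : R :=
  INR K * geom_const alpha + INR M * (8 * INR M / alpha + 2).

Lemma geom_const_pos alpha : 0 < alpha -> 0 < geom_const alpha.
Proof.
  intros Ha. unfold geom_const. apply Rinv_0_lt_compat.
  assert (0 < PI / (4 * alpha)) by (apply Rdiv_lt_0_compat; [apply PI_RGT_0|lra]).
  assert (exp (- (PI / (4 * alpha))) < 1) by (rewrite <- exp_0; apply exp_increasing; lra).
  lra.
Qed.

Lemma resonance_const_nonneg alpha K M : 0 < alpha -> 0 <= resonance_const alpha K M.
Proof.
  intros Ha. unfold resonance_const. pose proof (geom_const_pos alpha Ha).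
  pose proof (pos_INR K). pose proof (pos_INR M).
  assert (0 <= 8 * INR M / alpha) by (apply Rmult_le_pos; [lra|left; apply Rinv_0_lt_compat; lra]).
  nra.
Qed.

(** The phase [alpha (log m - log n0) / 2] lies within [eta ~ alpha / (4M)] of a
    multiple [k pi] for at most one [m] per [k], because the logarithms of
    [1..M] are [1/M]-spaced; such resonant [m] satisfy [|log m - log n0| >= pi |k| / alpha]
    and contribute at most a geometric series, while for the other [m] we have
    [|sin| >= eta / 2], i.e. [h m <= 2 / eta = 8 M / alpha + 2]. *)
Section Resonance.
Variables (alpha : R) (M K n0 : nat) (h : nat -> R).
Hypothesis halpha : 0 < alpha.
Hypothesis hn0 : In n0 (seq 1 M).
Hypothesis h_nonneg : forall m, 0 <= h m.
Hypothesis h_trivial : forall m, h m <= INR K.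
Hypothesis h_cancel : forall m, sin (alpha * (ln (INR m) - ln (INR n0)) / 2) <> 0 ->
  h m <= / Rabs (sin (alpha * (ln (INR m) - ln (INR n0)) / 2)).

Let dlog m := ln (INR m) - ln (INR n0).
Let phase m := alpha * dlog m / 2.
(** The integer [k] nearest to [phase m / pi], and the offset [phase m - k pi]. *)
Let res_index m := up (phase m / PI - / 2).
Let res_offset m := phase m - IZR (res_index m) * PI.
Let eta := alpha / (4 * INR M + alpha).
Let gam := PI / (4 * alpha).

Lemma res_offset_small m : Rabs (res_offset m) <= PI / 2.
Proof.
  unfold res_offset, res_index. pose proof PI_RGT_0.
  destruct (archimed (phase m / PI - / 2)) as [Hup1 Hup2]. set (k := up _) in *.
  assert (phase m - PI / 2 < IZR k * PI).
  { apply (Rmult_lt_compat_r PI) in Hup1; [|lra].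
    replace ((phase m / PI - / 2) * PI) with (phase m - PI / 2) in Hup1 by (field; lra). lra. }
  assert (IZR k * PI <= phase m + PI / 2).
  { replace (phase m + PI / 2) with ((phase m / PI + / 2) * PI) by (field; lra).
    apply Rmult_le_compat_r; lra. }
  apply Rabs_le; lra.
Qed.

Lemma M_ge_1 : 1 <= INR M.
Proof. apply in_seq in hn0. apply (le_INR 1). lia. Qed.

Lemma eta_bounds : 0 < eta < 1.
Proof.
  pose proof M_ge_1. unfold eta. split; [apply Rdiv_lt_0_compat; lra|].
  apply (Rmult_lt_reg_r (4 * INR M + alpha)); [lra|].
  unfold Rdiv. rewrite Rmult_assoc, Rinv_l; lra.
Qed.

(** Away from resonance the cancellation bound gives [h m <= 2 / eta]. *)
Lemma off_resonance m : eta <= Rabs (res_offset m) -> h m <= 8 * INR M / alpha + 2.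
Proof.
  intros Hoff. pose proof eta_bounds. pose proof M_ge_1.
  assert (Hsin : sin eta <= Rabs (sin (alpha * dlog m / 2))).
  { replace (alpha * dlog m / 2) with (res_offset m + IZR (res_index m) * PI)
      by (unfold res_offset, phase; ring).
    rewrite abs_sin_shift. apply sin_abs_ge; [lra|lra|apply res_offset_small]. }
  pose proof (sin_ge_half eta ltac:(lra)).
  assert (Hnz : sin (alpha * dlog m / 2) <> 0) by (intro E; rewrite E, Rabs_R0 in Hsin; lra).
  eapply Rle_trans; [apply (h_cancel m Hnz)|].
  replace (8 * INR M / alpha + 2) with (/ (eta / 2)) by (unfold eta; field; lra).
  apply Rinv_le_contravar; unfold dlog in Hsin; lra.
Qed.

Lemma resonance_unique x y :
  In x (seq 1 M) -> In y (seq 1 M) ->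
  Rabs (res_offset x) < eta -> Rabs (res_offset y) < eta ->
  res_index x = res_index y -> x = y.
Proof.
  intros Hx Hy Rx Ry Hk. pose proof M_ge_1.
  assert (Hphase : Rabs (phase x - phase y) < 2 * eta).
  { replace (phase x - phase y) with (res_offset x - res_offset y)
      by (unfold res_offset; rewrite Hk; ring).
    eapply Rle_lt_trans; [apply Rabs_triang|]. rewrite Rabs_Ropp. lra. }
  assert (Hclose : Rabs (ln (INR x) - ln (INR y)) < / INR M).
  { replace (phase x - phase y) with (alpha / 2 * (ln (INR x) - ln (INR y))) in Hphase
      by (unfold phase, dlog; field).
    rewrite Rabs_mult, (Rabs_right (alpha / 2)) in Hphase by lra.
    apply (Rmult_lt_reg_l (alpha / 2)); [lra|].
    eapply Rlt_le_trans; [exact Hphase|]. unfold eta.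
    apply (Rmult_le_reg_r (INR M * (4 * INR M + alpha))); [nra|].
    replace (2 * (alpha / (4 * INR M + alpha)) * (INR M * (4 * INR M + alpha)))
      with (2 * alpha * INR M) by (field; lra).
    replace (alpha / 2 * / INR M * (INR M * (4 * INR M + alpha)))
      with (2 * alpha * INR M + alpha * alpha / 2) by (field; lra).
    nra. }
  destruct (Nat.lt_total x y) as [Hl|[He|Hl]]; [exfalso| exact He |exfalso].
  - pose proof (ln_spacing M x y Hx Hy Hl). rewrite Rabs_minus_sym in Hclose.
    pose proof (Rle_abs (ln (INR y) - ln (INR x))). lra.
  - pose proof (ln_spacing M y x Hy Hx Hl).
    pose proof (Rle_abs (ln (INR x) - ln (INR y))). lra.
Qed.

(** A resonant [m] with nearest multiple [k pi] has [|log m - log n0| >= pi |k| / alpha],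
    so its weight is at most [e^{- gam * zcode k}]. *)
Lemma resonance_decay m :
  Rabs (res_offset m) < eta -> exp (- Rabs (dlog m) / 2) <= exp (- gam * INR (zcode (res_index m))).
Proof.
  intros Rm. pose proof eta_bounds. pose proof PI2_1. pose proof PI_RGT_0.
  apply exp_le_mono.
  assert (Hk : PI * Rabs (IZR (res_index m)) <= alpha * Rabs (dlog m)).
  { rewrite Rabs_Zabs.
    destruct (Z.eq_dec (Z.abs (res_index m)) 0) as [E|E].
    - rewrite E. pose proof (Rabs_pos (dlog m)). nra.
    - assert (1 <= IZR (Z.abs (res_index m))) by (apply IZR_le; lia).
      assert (Hphase : IZR (Z.abs (res_index m)) * PI - eta <= Rabs (phase m)).
      { unfold res_offset in Rm. rewrite Rabs_minus_sym in Rm.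
        pose proof (Rabs_triang_inv (IZR (res_index m) * PI) (phase m)).
        rewrite Rabs_mult, (Rabs_right PI), Rabs_Zabs in * by lra. lra. }
      replace (phase m) with (alpha / 2 * dlog m) in Hphase by (unfold phase; field).
      rewrite Rabs_mult, (Rabs_right (alpha / 2)) in Hphase by lra. nra. }
  pose proof (zcode_le (res_index m)).
  assert (0 < gam) by (unfold gam; apply Rdiv_lt_0_compat; lra).
  apply Rle_trans with (- (gam * (2 * Rabs (IZR (res_index m))))); [|nra].
  replace (- (gam * (2 * Rabs (IZR (res_index m))))) with
    (- (PI * Rabs (IZR (res_index m))) / (2 * alpha)) by (unfold gam; field; lra).
  apply (Rmult_le_reg_l (2 * alpha)); [lra|]. field_simplify; lra.
Qed.

Let res_part m :=
  if Rlt_dec (Rabs (res_offset m)) eta then INR K * exp (- Rabs (dlog m) / 2) else 0.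

Lemma term_split m :
  exp (- Rabs (dlog m) / 2) * h m <= res_part m + (8 * INR M / alpha + 2).
Proof.
  assert (Hw : 0 < exp (- Rabs (dlog m) / 2) <= 1).
  { split; [apply exp_pos|]. rewrite <- exp_0. apply exp_le_mono.
    pose proof (Rabs_pos (dlog m)). lra. }
  assert (Hoff : 0 <= 8 * INR M / alpha)
    by (apply Rmult_le_pos; [pose proof (pos_INR M); lra|left; apply Rinv_0_lt_compat; lra]).
  pose proof (h_nonneg m). unfold res_part.
  destruct (Rlt_dec (Rabs (res_offset m)) eta) as [_|Hn].
  - pose proof (h_trivial m). nra.
  - pose proof (off_resonance m ltac:(lra)) as Hh. nra.
Qed.

(** Resonant parts are summed along the injection [m |-> zcode (res_index m)]
    against the geometric series [K e^{-gam j}]. *)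
Lemma resonant_parts_bound : lsum res_part (seq 1 M) <= INR K * geom_const alpha.
Proof.
  set (L := seq 1 M). set (g m := zcode (res_index m)).
  set (N := S (list_max (map g L))).
  apply Rle_trans with (lsum (fun j => INR K * exp (- gam * INR j)) (seq 0 N)).
  2:{ rewrite lsum_scal. apply Rmult_le_compat_l; [apply pos_INR|].
      apply geometric_bound. unfold gam. apply Rdiv_lt_0_compat; [apply PI_RGT_0|lra]. }
  apply lsum_le_injective with (g := g) (P := fun m => Rabs (res_offset m) < eta).
  - apply seq_NoDup.
  - apply seq_NoDup.
  - intros x _. unfold res_part.
    destruct (Rlt_dec (Rabs (res_offset x)) eta); [now right|left; lra].
  - intros x y Hx Hy Rx Ry Hg. apply resonance_unique; auto. now apply zcode_inj.
  - intros j _. apply Rmult_le_pos; [apply pos_INR|left; apply exp_pos].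
  - intros x Hx Rx. split.
    + apply in_seq. split; [lia|]. simpl.
      enough (g x <= list_max (map g L))%nat by lia.
      assert (Hall := proj1 (list_max_le (map g L) _) (le_n _)).
      rewrite Forall_forall in Hall. apply Hall, in_map, Hx.
    + unfold res_part. destruct (Rlt_dec (Rabs (res_offset x)) eta) as [_|]; [|contradiction].
      apply Rmult_le_compat_l; [apply pos_INR|]. now apply resonance_decay.
Qed.

Lemma resonance_bound :
  lsum (fun m => exp (- Rabs (dlog m) / 2) * h m) (seq 1 M) <= resonance_const alpha K M.
Proof.
  eapply Rle_trans; [apply lsum_le; intros m _; apply term_split|].
  rewrite lsum_plus, lsum_const, length_seq.
  pose proof resonant_parts_bound. unfold resonance_const. lra.
Qed.
End Resonance.

(** * The mollifier as a Dirichlet polynomial *)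

Lemma mobius_abs n : Rabs (IZR (mobius n)) <= 1.
Proof.
  unfold mobius. destruct (squarefreeb n); [|rewrite Rabs_R0; lra].
  rewrite Rabs_Zabs, Z.abs_pow, Z.pow_1_l by lia. simpl; lra.
Qed.

(** The smoothing factor [1 - log n / log T^theta] lies in [[0, 1]], so [|c_n| <= 1]. *)
Lemma Mcoef_abs theta T n : 1 < T -> 0 < theta -> (1 <= n)%nat -> Rabs (Mcoef theta T n) <= 1.
Proof.
  intros HT Hth Hn. unfold Mcoef.
  destruct (Rle_dec (INR n) (Rpower T theta)) as [Hle|_]; [|rewrite Rabs_R0; lra].
  assert (Hlog : 0 < ln (Rpower T theta))
    by (unfold Rpower; rewrite ln_exp; apply Rmult_lt_0_compat; auto using ln_pos_gt1).
  assert (1 <= INR n) by (apply (le_INR 1); auto).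
  assert (0 <= ln (INR n)) by (rewrite <- ln_1; apply ln_le_mono; lra).
  assert (ln (INR n) <= ln (Rpower T theta)) by (apply ln_le_mono; lra).
  assert (0 <= ln (INR n) / ln (Rpower T theta) <= 1).
  { split; [apply Rmult_le_pos; [lra|left; now apply Rinv_0_lt_compat]|].
    apply (Rmult_le_reg_r (ln (Rpower T theta))); [exact Hlog|].
    unfold Rdiv. rewrite Rmult_assoc, Rinv_l; lra. }
  rewrite Rabs_mult, (Rabs_right (1 - _)) by lra.
  pose proof (mobius_abs n). pose proof (Rabs_pos (IZR (mobius n))). nra.
Qed.

(** The coefficient [a_n = c_n n^{-1/2}] of [n^{-it}] in [M_theta(1/2 + it)]. *)
Definition acoef (theta T : R) (n : nat) : R := Mcoef theta T n * Rpower (INR n) (- / 2).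

Lemma acoef_abs theta T n : 1 < T -> 0 < theta -> (1 <= n)%nat ->
  Rabs (acoef theta T n) <= exp (- ln (INR n) / 2).
Proof.
  intros HT Hth Hn. unfold acoef, Rpower.
  rewrite Rabs_mult, (Rabs_right (exp _)) by (left; apply exp_pos).
  replace (- / 2 * ln (INR n)) with (- ln (INR n) / 2) by field.
  pose proof (Mcoef_abs theta T n HT Hth Hn). pose proof (exp_pos (- ln (INR n) / 2)). nra.
Qed.

Lemma M_abs2_expand theta T t :
  M_abs2 theta T t =
  lsum (fun m => lsum (fun n => acoef theta T m * acoef theta T n
                                 * cos (t * ln (INR m) - t * ln (INR n)))
          (seq 1 (Mlen theta T))) (seq 1 (Mlen theta T)).
Proof.
  unfold M_abs2, M_re, M_im. change (fold_right Rplus 0 (map ?f ?s)) with (lsum f s).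
  rewrite <- !Rsqr_pow2. unfold Rsqr. rewrite !lsum_mul, <- lsum_plus.
  apply lsum_ext; intros m _. rewrite <- lsum_plus. apply lsum_ext; intros n _.
  rewrite cos_minus. unfold acoef. ring.
Qed.

(** * Mean square of [M_theta] over [K] consecutive points of the progression *)

(** Expanding [|M_theta|^2] turns the window sum into a double sum over [m, n] of
    [a_m a_n] times a progression of cosines with step [alpha (log m - log n)].
    Since [|a_m a_n| <= (1/m + 1/n) e^{-|log m - log n|/2}], the resonance bound
    applied to each column gives [2 (1 + log M)] times [resonance_const]. *)
Section Window.
Variables (theta T alpha beta : R) (A : Z) (K : nat).
Hypotheses (hT : 1 < T) (htheta : 0 < theta) (halpha : 0 < alpha).
Hypothesis hM : (1 <= Mlen theta T)%nat.

Let M := Mlen theta T.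
Let L := seq 1 M.
Let a := acoef theta T.
Let dlog m n := ln (INR m) - ln (INR n).
(** [S m n]: the window sum of [cos (t (log m - log n))], [t = alpha l + beta], [A <= l < A + K];
    [E m n]: its size weighted by the decay [e^{-|log m - log n|/2}]. *)
Let S m n := cos_prog K ((alpha * IZR A + beta) * dlog m n) (alpha * dlog m n).
Let E m n := exp (- Rabs (dlog m n) / 2) * Rabs (S m n).

Lemma window_expand :
  lsum (fun j => M_abs2 theta T (alpha * IZR (A + Z.of_nat j) + beta)) (seq 0 K)
  = lsum (fun m => lsum (fun n => a m * a n * S m n) L) L.
Proof.
  rewrite (lsum_ext _ (fun j => lsum (fun m => lsum (fun n => a m * a n *
     cos ((alpha * IZR (A + Z.of_nat j) + beta) * ln (INR m)
          - (alpha * IZR (A + Z.of_nat j) + beta) * ln (INR n))) L) L))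
    by (intros; apply M_abs2_expand).
  rewrite lsum_swap. apply lsum_ext; intros m _.
  rewrite lsum_swap. apply lsum_ext; intros n _.
  unfold S, cos_prog. rewrite <- lsum_scal. apply lsum_ext; intros j _.
  unfold dlog. rewrite plus_IZR, <- INR_IZR_INZ. f_equal. f_equal. ring.
Qed.

Lemma window_term m n : In m L -> In n L -> a m * a n * S m n <= (/ INR m + / INR n) * E m n.
Proof.
  intros Hm Hn. apply in_seq in Hm, Hn.
  assert (Hinv : forall k, (1 <= k)%nat -> / INR k = exp (- ln (INR k))).
  { intros k Hk. rewrite exp_Ropp, exp_ln; [reflexivity|apply lt_0_INR; lia]. }
  rewrite (Hinv m), (Hinv n) by lia.
  pose proof (acoef_abs theta T m hT htheta ltac:(lia)) as Ham.
  pose proof (acoef_abs theta T n hT htheta ltac:(lia)) as Han.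
  pose proof (Rabs_pos (a m)). pose proof (Rabs_pos (a n)). pose proof (Rabs_pos (S m n)).
  eapply Rle_trans; [apply Rle_abs|]. rewrite !Rabs_mult.
  unfold E. rewrite <- Rmult_assoc. apply Rmult_le_compat_r; [assumption|].
  eapply Rle_trans; [|apply exp_half_pair]. apply Rmult_le_compat; assumption.
Qed.

Lemma E_sym m n : E m n = E n m.
Proof.
  unfold E, S, dlog. rewrite <- cos_prog_opp, Rabs_minus_sym.
  do 3 f_equal; ring.
Qed.

Lemma E_column n : In n L -> lsum (fun m => E m n) L <= resonance_const alpha K M.
Proof.
  intros Hn. apply (resonance_bound alpha M K n (fun m => Rabs (S m n))); auto.
  - intros; apply Rabs_pos.
  - intros; apply cos_progression_trivial.
  - intros m Hs. now apply cos_progression_cancel.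
Qed.

Lemma window_bound :
  lsum (fun j => M_abs2 theta T (alpha * IZR (A + Z.of_nat j) + beta)) (seq 0 K)
  <= 2 * resonance_const alpha K M * (1 + ln (INR M)).
Proof.
  set (B := resonance_const alpha K M).
  (* Weighting column sums bounded by [B] with [1/m] costs a harmonic sum. *)
  assert (Hweighted : forall F : nat -> R, (forall m, In m L -> F m <= B) ->
            lsum (fun m => / INR m * F m) L <= B * (1 + ln (INR M))).
  { intros F HF. apply Rle_trans with (lsum (fun m => B * / INR m) L).
    - apply lsum_le; intros m Hm. rewrite Rmult_comm. apply Rmult_le_compat_r; auto.
      apply in_seq in Hm. left; apply Rinv_0_lt_compat, lt_0_INR; lia.
    - rewrite lsum_scal. apply Rmult_le_compat_l; [apply resonance_const_nonneg; lra|].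
      now apply harmonic_bound. }
  rewrite window_expand.
  eapply Rle_trans.
  { apply lsum_le; intros m Hm; apply lsum_le; intros n Hn. now apply window_term. }
  rewrite (lsum_ext _ (fun m => / INR m * lsum (fun n => E n m) L
                                + lsum (fun n => / INR n * E m n) L)).
  2:{ intros m _. rewrite <- lsum_scal, <- lsum_plus.
      apply lsum_ext; intros n _. rewrite E_sym. ring. }
  rewrite lsum_plus, lsum_swap.
  pose proof (Hweighted (fun n => lsum (fun m => E m n) L) E_column) as Hcol.
  rewrite (lsum_ext (fun n => lsum (fun m => / INR n * E m n) L)
                    (fun n => / INR n * lsum (fun m => E m n) L)) by (intros; apply lsum_scal).
  lra.
Qed.
End Window.

(** * From the smoothed sum to a window, and the size of the parameters *)

(** [phi (l / T)] vanishes unless [T <= l <= 2T], i.e. unless [l] lies in the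
    window of integers [window_start T <= l < window_start T + window_len T]. *)
Definition window_start (T : R) : Z := (up T - 1)%Z.
Definition window_len (T : R) : nat := Z.to_nat (up (2 * T) - window_start T).

Lemma M_abs2_nonneg theta T t : 0 <= M_abs2 theta T t.
Proof.
  unfold M_abs2. pose proof (pow2_ge_0 (M_re theta T t)).
  pose proof (pow2_ge_0 (M_im theta T t)). lra.
Qed.

(** Since [0 <= phi <= 1], each symmetric partial sum is dominated by the unweighted
    window sum: every [l] with [phi (l / T) <> 0] is sent to its position in the window. *)
Lemma sym_sum_le_window theta T alpha beta (phi : R -> R) N :
  1 < T -> (forall x, 0 <= phi x <= 1) -> (forall x, (x < 1 \/ 2 < x) -> phi x = 0) ->
  sym_sum N (fun l => M_abs2 theta T (alpha * IZR l + beta) * phi (IZR l / T))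
  <= lsum (fun j => M_abs2 theta T (alpha * IZR (window_start T + Z.of_nat j) + beta))
          (seq 0 (window_len T)).
Proof.
  intros HT Hrange Hsupp. unfold window_len, window_start.
  set (A := (up T - 1)%Z).
  change (sym_sum N ?F) with (lsum (fun k => F (Z.of_nat k - Z.of_nat N)%Z) (seq 0 (2 * N + 1))).
  destruct (archimed T) as [HuT1 HuT2]. destruct (archimed (2 * T)) as [Hu2T1 Hu2T2].
  assert (Hout : forall l : Z, (l < A \/ up (2 * T) <= l)%Z -> IZR l / T < 1 \/ 2 < IZR l / T).
  { intros l [Hl|Hl].
    - left. assert (IZR l <= IZR (up T) - 2) by (rewrite <- minus_IZR; apply IZR_le; unfold A in Hl; lia).
      apply (Rmult_lt_reg_r T); [lra|]. unfold Rdiv. rewrite Rmult_assoc, Rinv_l; lra.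
    - right. apply IZR_le in Hl.
      apply (Rmult_lt_reg_r T); [lra|]. unfold Rdiv. rewrite Rmult_assoc, Rinv_l; lra. }
  apply lsum_le_injective with (g := fun k => Z.to_nat (Z.of_nat k - Z.of_nat N - A))
    (P := fun k => (A <= Z.of_nat k - Z.of_nat N < up (2 * T))%Z).
  - apply seq_NoDup.
  - apply seq_NoDup.
  - intros k _. set (l := (Z.of_nat k - Z.of_nat N)%Z).
    destruct (Z_lt_le_dec l A) as [Hl|Hl];
      [|destruct (Z_lt_le_dec l (up (2 * T))) as [Hl2|Hl2]; [right; unfold l in *; lia|]];
      left; rewrite Hsupp by (apply Hout; lia); lra.
  - intros x y _ _ Px Py Hg. apply Nat2Z.inj. apply (f_equal Z.of_nat) in Hg.
    rewrite !Z2Nat.id in Hg by lia. lia.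
  - intros; apply M_abs2_nonneg.
  - intros k _ Pk. split; [apply in_seq; lia|].
    rewrite Z2Nat.id by lia.
    replace (A + (Z.of_nat k - Z.of_nat N - A))%Z with (Z.of_nat k - Z.of_nat N)%Z by lia.
    pose proof (M_abs2_nonneg theta T (alpha * IZR (Z.of_nat k - Z.of_nat N) + beta)).
    pose proof (Hrange (IZR (Z.of_nat k - Z.of_nat N) / T)). nra.
Qed.

Lemma window_len_le T : 1 < T -> INR (window_len T) <= T + 2.
Proof.
  intros HT. unfold window_len, window_start.
  destruct (archimed T) as [HuT1 HuT2]. destruct (archimed (2 * T)) as [Hu2T1 Hu2T2].
  assert (Hlen : IZR (up T - 1) <= IZR (up (2 * T))) by (rewrite minus_IZR; lra).
  apply le_IZR in Hlen.
  rewrite INR_IZR_INZ, Z2Nat.id by lia. rewrite !minus_IZR. lra.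
Qed.

Lemma Mlen_bounds theta T : 1 < T -> 0 < theta < / 2 ->
  (1 <= Mlen theta T)%nat /\ INR (Mlen theta T) * INR (Mlen theta T) <= 4 * T
  /\ INR (Mlen theta T) <= 2 * T.
Proof.
  intros HT Hth. pose proof (ln_pos_gt1 T HT) as HlnT.
  set (X := Rpower T theta).
  assert (HX1 : 1 <= X).
  { unfold X, Rpower. rewrite <- exp_0. apply exp_le_mono. nra. }
  assert (HXX : X * X <= T).
  { unfold X, Rpower. rewrite <- exp_plus.
    replace T with (exp (ln T)) at 3 by (apply exp_ln; lra). apply exp_le_mono. nra. }
  destruct (archimed X) as [Hu1 Hu2].
  assert (HM : INR (Mlen theta T) = IZR (up X)).
  { unfold Mlen. fold X. rewrite INR_IZR_INZ, Z2Nat.id; [reflexivity|]. apply le_IZR. lra. }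
  assert (HM1 : (1 <= Mlen theta T)%nat).
  { apply INR_le. rewrite HM. simpl. lra. }
  rewrite HM. split; [exact HM1|split; nra].
Qed.

Lemma resonance_const_le alpha K M T :
  0 < alpha -> 1 <= T -> INR K <= T + 2 -> INR M * INR M <= 4 * T -> INR M <= 2 * T ->
  resonance_const alpha K M <= (3 * geom_const alpha + 32 / alpha + 4) * T.
Proof.
  intros Ha HT HK HM2 HM. unfold resonance_const.
  pose proof (geom_const_pos alpha Ha). pose proof (pos_INR K).
  assert (INR M * (8 * INR M / alpha) <= 32 / alpha * T).
  { replace (INR M * (8 * INR M / alpha)) with (8 / alpha * (INR M * INR M)) by (field; lra).
    replace (32 / alpha * T) with (8 / alpha * (4 * T)) by (field; lra).
    apply Rmult_le_compat_l; [|exact HM2]. left; apply Rdiv_lt_0_compat; lra. }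
  nra.
Qed.

Lemma log_Mlen_le M T : exp 1 <= T -> (1 <= M)%nat -> INR M <= 2 * T -> 1 + ln (INR M) <= 3 * ln T.
Proof.
  intros HT HM1 HM.
  assert (HlnT : 1 <= ln T) by (rewrite <- (ln_exp 1); apply ln_le_mono; [apply exp_pos|lra]).
  assert (ln (INR M) <= ln 2 + ln T).
  { rewrite <- ln_mult by (pose proof (exp_pos 1); lra). apply ln_le_mono; [|lra].
    apply lt_0_INR; lia. }
  assert (ln 2 < 1).
  { rewrite <- (ln_exp 1). apply ln_increasing; [lra|]. pose proof (exp_ineq1 1). lra. }
  lra.
Qed.

(** The main theorem, with [C = 6 (3 geom_const alpha + 32 / alpha + 4)] and [T0 = e]:
    smoothed sum <= window sum <= [2 resonance_const (1 + log M)] <= [C T log T]. *)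
Theorem mainTheorem9 (theta alpha beta : R) (phi : R -> R)
  (htheta : 0 < theta < /2) (halpha : 0 < alpha)
  (hsmooth : smooth phi)
  (hrange : forall x, 0 <= phi x <= 1)
  (hsupp : forall x, (x < 1 \/ 2 < x) -> phi x = 0) :
  exists C T0 : R, 0 < C /\ 1 < T0 /\
    forall T : R, T0 <= T -> forall N : nat,
      sym_sum N (fun l => M_abs2 theta T (alpha * IZR l + beta) * phi (IZR l / T))
        <= C * T * ln T.
Proof.
  set (C1 := 3 * geom_const alpha + 32 / alpha + 4).
  assert (HC1 : 0 < C1).
  { pose proof (geom_const_pos alpha halpha).
    assert (0 < 32 / alpha) by (apply Rdiv_lt_0_compat; lra). unfold C1; lra. }
  pose proof (exp_ineq1 1 ltac:(lra)) as He.
  exists (6 * C1), (exp 1). split; [lra|split; [lra|]].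
  intros T HT N. assert (HT1 : 1 < T) by lra.
  destruct (Mlen_bounds theta T HT1 htheta) as [HM1 [HM2 HM]].
  set (M := Mlen theta T) in *.
  pose proof (resonance_const_le alpha (window_len T) M T halpha ltac:(lra)
                (window_len_le T HT1) HM2 HM) as HB.
  pose proof (log_Mlen_le M T HT HM1 HM) as HL.
  pose proof (resonance_const_nonneg alpha (window_len T) M halpha).
  assert (0 <= ln (INR M)) by (rewrite <- ln_1; apply ln_le_mono; [lra|apply (le_INR 1); exact HM1]).
  eapply Rle_trans; [apply sym_sum_le_window; assumption|].
  eapply Rle_trans; [apply window_bound; (assumption || lra)|].
  fold M C1 in HB |- *. apply Rle_trans with (2 * (C1 * T) * (3 * ln T)); [|right; ring].
  apply Rmult_le_compat; lra.
Qed.
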